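(* Every finite field extension $K$ of a Brauer field $k$ is a Brauer field.
   Context: A field $k$ is a Brauer field if for every $d\ge 1$ there is a number $N_k(d)$ such that every equation $a_1x_1^d+\cdots+a_nx_n^d=0$ with $n>N_k(d)$ and $a_i\in k$ has a non-trivial solution in $k^n$. *)

From HB Require Import structures.
From mathcomp Require Import all_boot all_order all_algebra all_field.
Set Implicit Arguments. Unset Strict Implicit. Unset Printing Implicit Defensive.
Import GRing.Theory.
Local Open Scope ring_scope.

Definition brauer_field (k : fieldType) : Prop :=
  forall d : nat, (1 <= d)%N ->
    exists N : nat, forall (n : nat) (a : 'I_n -> k), (N < n)%N ->
      exists x : 'I_n -> k, (exists i, x i != 0) /\ \sum_(i < n) a i * x i ^+ d = 0.

From HB Require Import structures.
From mathcomp Require Import all_boot all_order all_algebra all_field.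

(* Choose a basis e_1, ..., e_m of K over k.  For x_i in k, the form
   sum_i a_i x_i^d vanishes iff the m diagonal forms over k given by the
   coordinates of the a_i all vanish, so it suffices that m diagonal forms of
   degree d over k have a common non-trivial zero in enough variables.  This
   follows from the Brauer property by induction on m: split the variables into
   blocks, solve the first form inside each block, and scale block b by a new
   variable t_b; the first form then vanishes identically, while the remaining
   m - 1 forms become diagonal forms in the t_b. *)

Set Implicit Arguments. Unset Strict Implicit. Unset Printing Implicit Defensive.
Import GRing.Theory.
Local Open Scope ring_scope.

Section DiagonalSystems.
Variables (k : fieldType) (d : nat).

Definition diagonal_systems_solvable (r : nat) (T : finType) : Prop :=
  forall a : 'I_r -> T -> k, exists x : T -> k,
    (exists t, x t != 0) /\ forall j, \sum_t a j t * x t ^+ d = 0.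

Lemma diagonal_systems_solvable0 (T : finType) :
  (0 < #|T|)%N -> diagonal_systems_solvable 0 T.
Proof.
case/card_gt0P=> t0 _ a; exists (fun=> 1).
by split; [exists t0; rewrite oner_eq0 | case].
Qed.

Lemma diagonal_systems_solvable_prod r (S U : finType) :
  diagonal_systems_solvable 1 U -> diagonal_systems_solvable r S ->
  diagonal_systems_solvable r.+1 (S * U)%type.
Proof.
move=> solU solS a.
have solve_block s : exists y : U -> k,
    (exists u, y u != 0) /\ \sum_u a ord0 (s, u) * y u ^+ d = 0.
  have [y [y_nz y0]] := solU (fun _ u => a ord0 (s, u)).
  by exists y; split; last exact: y0 ord0.
have [y Y] := fin_all_exists solve_block.
have [t [[s0 ts0_nz] t0]] :=
  solS (fun j s => \sum_u a (lift ord0 j) (s, u) * y s u ^+ d).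
exists (fun p => t p.1 * y p.1 p.2); split.
  by have [[u0 y_nz] _] := Y s0; exists (s0, u0); rewrite mulf_neq0.
have blockwise j : \sum_(p : S * U) a j p * (t p.1 * y p.1 p.2) ^+ d
    = \sum_s (\sum_u a j (s, u) * y s u ^+ d) * t s ^+ d.
  transitivity (\sum_s \sum_u a j (s, u) * (t s * y s u) ^+ d).
    by rewrite pair_bigA; apply: eq_bigr => -[s u].
  apply: eq_bigr => s _; rewrite big_distrl /=.
  by apply: eq_bigr => u _; rewrite exprMn mulrCA [RHS]mulrC.
move=> j; rewrite blockwise; case: (unliftP ord0 j) => [j' ->|->].
  exact: t0.
by apply: big1 => s _; have [_ ->] := Y s; rewrite mul0r.
Qed.

Hypothesis d_gt0 : (0 < d)%N.

Lemma diagonal_systems_solvable_inj r (S T : finType) (f : S -> T) :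
  injective f -> diagonal_systems_solvable r S -> diagonal_systems_solvable r T.
Proof.
move=> f_inj solS a.
have [x [[s0 xs0_nz] x0]] := solS (fun j s => a j (f s)).
pose xT t := if [pick s | f s == t] is Some s then x s else 0.
have xTf s : xT (f s) = x s.
  by rewrite /xT; case: pickP => [s' /eqP/f_inj -> | /(_ s)]; rewrite ?eqxx.
exists xT; split; first by exists (f s0); rewrite xTf.
move=> j; rewrite (bigID [in f @: S]) /= big_imset /=; last exact: in2W.
rewrite [X in _ + X]big1 ?addr0 => [|t t_notin_fS].
  by rewrite -[RHS](x0 j); apply: eq_bigr => s _; rewrite xTf.
rewrite /xT; case: pickP => [s /eqP fs_t | _]; last first.
  by rewrite expr0n eqn0Ngt d_gt0 mulr0.
by rewrite -fs_t imset_f in t_notin_fS.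
Qed.

Lemma diagonal_systems_solvable_leq_card r (S T : finType) :
  (#|S| <= #|T|)%N -> diagonal_systems_solvable r S -> diagonal_systems_solvable r T.
Proof.
move=> le_ST; pose f s := enum_val (widen_ord le_ST (enum_rank s)).
apply: (@diagonal_systems_solvable_inj r S T f).
by move=> s1 s2 /enum_val_inj /(congr1 val) /= /val_inj /enum_rank_inj.
Qed.

Hypothesis brauer_k : brauer_field k.

Lemma brauer_diagonal_systems_solvable1 : exists N,
  forall T : finType, (N < #|T|)%N -> diagonal_systems_solvable 1 T.
Proof.
have [N brauerN] := brauer_k d_gt0; exists N => T lt_NT.
apply: (@diagonal_systems_solvable_leq_card 1 'I_N.+1); first by rewrite card_ord.
move=> a; have [x [x_nz x0]] := brauerN N.+1 (a ord0) (ltnSn N).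
by exists x; split=> // j; rewrite ord1.
Qed.

Lemma brauer_diagonal_systems_solvable r : exists N,
  forall T : finType, (N < #|T|)%N -> diagonal_systems_solvable r T.
Proof.
have [N1 sol1] := brauer_diagonal_systems_solvable1.
elim: r => [|r [N solN]]; first by exists 0%N; apply: diagonal_systems_solvable0.
exists (N.+1 * N1.+1)%N => T lt_T.
apply: (@diagonal_systems_solvable_leq_card _ ('I_N.+1 * 'I_N1.+1)%type).
  by rewrite card_prod !card_ord ltnW.
by apply: diagonal_systems_solvable_prod; [apply: sol1 | apply: solN];
  rewrite card_ord.
Qed.

End DiagonalSystems.

Lemma diagonal_form_scalar_coord (k : fieldType) (A : falgType k) (d n : nat)
    (a : 'I_n -> A) (x : 'I_n -> k) :
  \sum_i a i * (x i)%:A ^+ d =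
  \sum_(j < \dim {:A})
    (\sum_i coord (vbasis {:A}) j (a i) * x i ^+ d) *: (vbasis {:A})`_j.
Proof.
rewrite [LHS](coord_vbasis (memvf _)); apply: eq_bigr => j _; congr (_ *: _).
rewrite linear_sum; apply: eq_bigr => i _.
by rewrite exprZn expr1n mulr_algr linearZ /= mulrC.
Qed.

Theorem proposition2p7 (k : fieldType) (K : fieldExtType k) :
  brauer_field k -> brauer_field K.
Proof.
move=> brauer_k d d_gt0.
have [N solN] := brauer_diagonal_systems_solvable d_gt0 brauer_k (\dim {:K}).
exists N => n a lt_Nn.
have lt_N_card : (N < #|'I_n|)%N by rewrite card_ord.
have [x [[i0 xi0_nz] x0]] :=
  solN 'I_n lt_N_card (fun j i => coord (vbasis {:K}) j (a i)).
exists (fun i => (x i)%:A); split.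
  by exists i0; rewrite scaler_eq0 oner_eq0 orbF.
by rewrite diagonal_form_scalar_coord big1 // => j _; rewrite x0 scale0r.
Qed.
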